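(* Let $V=(\mathbb F_2)^n$ and $\gamma\in\mathrm{Sym}(V)$ with $0\gamma=0$. Then: (i) If $\gamma$ maps $\mathcal L(W)$ onto $\mathcal L(W')$, then for every $u\in W$, $\hat\gamma_u(V)\subseteq W'$. (ii) If $\gamma$ maps $\mathcal L(W)$ onto $\mathcal{LA}_U(W_1|W_2)$, then for every $u\in W$: $\hat\gamma_u(S)\subseteq W_1$ where $S=U\gamma^{-1}$, and $\hat\gamma_u(S')\subseteq W_2$ where $S'=(U+\bar v)\gamma^{-1}$ for an arbitrary $\bar v\in V\setminus U$. (iii) If $\gamma$ maps $\mathcal{LA}_U(W_1|W_2)$ onto $\mathcal L(W)$, then for every $u\in W_1$, $\hat\gamma_u(U)\subseteq W$; and for every $u\in W_2$, $\hat\gamma_u(U+\bar v)\subseteq W$ for an arbitrary $\bar v\in V\setminus U$. (iv) If $\gamma$ maps $\mathcal{LA}_U(W_1|W_2)$ onto $\mathcal{LA}_{U'}(W_1'|W_2')$, then, with $\bar v\in V\setminus U$ and $\bar v'\in V\setminus U'$ arbitrary: for every $u\in W_1$, $\hat\gamma_u(S)\subseteq W_1'$ where $S=U\cap (U'\gamma^{-1})$; for every $u\in W_2$, $\hat\gamma_u(S')\subseteq W_1'$ where $S'=(U+\bar v)\cap (U'\gamma^{-1})$; for every $u\in W_1$, $\hat\gamma_u(S)\subseteq W_2'$ where $S=U\cap ((U'+\bar v')\gamma^{-1})$; for every $u\in W_2$, $\hat\gamma_u(S')\subseteq W_2'$ where $S'=(U+\bar v)\cap((U'+\bar v')\ga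mma^{-1})$.
   Context: Permutations act on the right; for $X\subseteq V$, $X\gamma^{-1}$ is the preimage of $X$ under $\gamma$. The derivative of $\gamma$ in direction $u$ is $\hat\gamma_u(x)=(x+u)\gamma+x\gamma$, and $\hat\gamma_u(S)=\{\hat\gamma_u(s):s\in S\}$. A permutation maps a partition $\mathcal A$ onto $\mathcal B$ if the images of the blocks of $\mathcal A$ are exactly the blocks of $\mathcal B$. For a subspace $W$, $\mathcal L(W)=\{W+v:v\in V\}$. For a subspace $U$ of dimension $n-1$ and subspaces $W_1,W_2\subseteq U$, $\mathcal{LA}_U(W_1|W_2)=\{W_1+v:v\in U\}\cup\{(W_2+\bar v)+v:v\in U\}$ for any $\bar v\in V\setminus U$ (independent of the choice). *)

From HB Require Import structures.
From mathcomp Require Import all_boot all_order all_algebra all_fingroup.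
Set Implicit Arguments. Unset Strict Implicit. Unset Printing Implicit Defensive.
Import GRing.Theory.
Local Open Scope ring_scope.

Notation V n := 'rV['F_2]_n.

(* Permutations act on the right: x gamma is written (g x) for g : {perm V n}. *)

Definition cosetv n (W : {vspace V n}) (v : V n) : {set V n} :=
  [set w + v | w in W].

Definition vset n (W : {vspace V n}) : {set V n} := [set x | x \in W].

Definition Lpart n (W : {vspace V n}) : {set {set V n}} :=
  [set cosetv W v | v : V n].

Definition LApart n (U W1 W2 : {vspace V n}) (vbar : V n) : {set {set V n}} :=
  [set cosetv W1 v | v in U] :|: [set cosetv W2 (vbar + v) | v in U].

Definition maps_onto n (g : {perm V n}) (A B : {set {set V n}}) : Prop :=
  [set g @: X | X : {set V n} in A] = B.

Definition preimg n (g : {perm V n}) (X : {set V n}) : {set V n} :=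
  [set x | g x \in X].

Definition deriv n (g : {perm V n}) (u x : V n) : V n := g (x + u) + g x.

Definition deriv_img n (g : {perm V n}) (u : V n) (S : {set V n}) : {set V n} :=
  [set deriv g u x | x in S].

Definition hyperplane n (U : {vspace V n}) : Prop := (\dim U).+1 = n.

(** The argument is the same in all four parts.  Every block of [L(W)] and of
    [LA_U(W1|W2)] is a coset [W + x] of a "direction" depending only on the
    point [x] of the block: [W] for [L(W)]; [W1] inside [U] and [W2] outside [U]
    for [LA_U(W1|W2)].  If [u] lies in the direction at [x], then [x] and
    [x + u] share a block, so [x gamma] and [(x + u) gamma] share the image block,
    and their sum [hat gamma_u(x)] lies in the direction at [x gamma].  The sets
    [S] of the statement are exactly where these two directions are the given
    ones. *)

From Pilot Require Import Defs.
From HB Require Import structures.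
From mathcomp Require Import all_boot all_order all_algebra all_fingroup.
Set Implicit Arguments. Unset Strict Implicit. Unset Printing Implicit Defensive.
Import GRing.Theory.
Local Open Scope ring_scope.

Section F2Vectors.

Variable n : nat.
Implicit Types (x y v : V n) (U W : {vspace V n}).

Lemma oppvF2 x : - x = x.
Proof. by rewrite -scaleN1r (_ : -1 = 1 :> 'F_2) ?scale1r //; apply/eqP. Qed.

Lemma addvv x : x + x = 0.
Proof. by rewrite -{2}[x]oppvF2 subrr. Qed.

Lemma addvK v x : x + v + v = x.
Proof. by rewrite -{2}[v]oppvF2 addrK. Qed.

Lemma addKv v x : v + (v + x) = x.
Proof. by rewrite addrA addvv add0r. Qed.

Lemma hyperplane_addv_line U x :
  hyperplane U -> x \notin U -> (U + <[x]>)%VS = fullv.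
Proof.
move=> dimU xU; apply/eqP; rewrite eqEdim subvf dimvf /dim /= mul1n.
suff: (\dim U < \dim (U + <[x]>))%N by rewrite dimU.
by rewrite (ltn_leqif (dimv_leqif_sup (addvSl U <[x]>))) subv_add subvv -memvE.
Qed.

Lemma memv_lineF2 x y : y \in <[x]>%VS -> y = 0 \/ y = x.
Proof.
case/vlineP=> k ->; have [->|->] : k = 0 \/ k = 1.
  by case: k => [[|[|k]] // k_lt2]; [left | right]; apply/val_inj.
- by left; rewrite scale0r.
- by right; rewrite scale1r.
Qed.

Lemma hyperplane_addv_notin U x y :
  hyperplane U -> x \notin U -> y \notin U -> x + y \in U.
Proof.
move=> dimU xU yU; have : y \in (U + <[x]>)%VS by rewrite hyperplane_addv_line ?memvf.
case/memv_addP=> w wU [v /memv_lineF2[|] -> defy]; move: yU; rewrite defy.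
- by rewrite addr0 wU.
- by rewrite addrCA addvv addr0.
Qed.

Lemma mem_cosetv W v x : (x \in cosetv W v) = (x + v \in W).
Proof.
apply/imsetP/idP => [[w wW ->]|xvW]; first by rewrite addvK.
by exists (x + v); rewrite ?addvK.
Qed.

Lemma cosetv_addv W v x y :
  x \in cosetv W v -> y \in cosetv W v -> x + y \in W.
Proof.
rewrite !mem_cosetv => xvW yvW.
by rewrite -[x + y]addr0 -(addvv v) addrACA memvD.
Qed.

Lemma cosetv_self W x u : u \in W -> (x \in cosetv W x) && (x + u \in cosetv W x).
Proof. by move=> uW; rewrite !mem_cosetv addvv mem0v addrAC addvv add0r. Qed.

Lemma mem_cosetv_sub U W v x :
  (W <= U)%VS -> x \in cosetv W v -> (x \in U) = (v \in U).
Proof.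
move=> sWU; rewrite mem_cosetv => /(subvP sWU) xvU.
by rewrite -(rpredDr v xvU) addrCA addvv addr0.
Qed.

End F2Vectors.

Section BlockDirections.

Variable n : nat.
Implicit Types (P A B : {set {set V n}}) (D : V n -> {vspace V n})
  (U W : {vspace V n}) (x u vb : V n).

Definition shift_joined P D : Prop :=
  forall x u, u \in D x -> exists2 X, X \in P & (x \in X) && (x + u \in X).

Definition block_diff_in P D : Prop :=
  forall X, X \in P -> {in X &, forall x y, x + y \in D x}.

Definition LAdir (U W1 W2 : {vspace V n}) (x : V n) : {vspace V n} :=
  if x \in U then W1 else W2.

Lemma Lpart_shift W : shift_joined (Lpart W) (fun=> W).
Proof. by move=> x u uW; exists (cosetv W x); rewrite ?imset_f ?cosetv_self. Qed.

Lemma Lpart_diff W : block_diff_in (Lpart W) (fun=> W).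
Proof. by move=> _ /imsetP[v _ ->] x y; apply: cosetv_addv. Qed.

Lemma LApart_shift U W1 W2 vb :
  hyperplane U -> vb \notin U -> shift_joined (LApart U W1 W2 vb) (LAdir U W1 W2).
Proof.
move=> dimU vbU x u; rewrite /LAdir; case: ifP => xU uW.
  by exists (cosetv W1 x); rewrite ?cosetv_self // inE imset_f.
(* [vb + x] lies in [U] since [U] has index 2, so [W2 + x] is a block. *)
exists (cosetv W2 (vb + (vb + x))); last by rewrite addKv cosetv_self.
by apply/setUP; right; apply/imsetP; exists (vb + x); rewrite ?hyperplane_addv_notin ?xU.
Qed.

Lemma LApart_diff U W1 W2 vb :
  (W1 <= U)%VS -> (W2 <= U)%VS -> vb \notin U ->
  block_diff_in (LApart U W1 W2 vb) (LAdir U W1 W2).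
Proof.
move=> sW1U sW2U vbU _ /setUP[]/imsetP[v vU ->] x y xX yX; rewrite /LAdir.
  by rewrite (mem_cosetv_sub sW1U xX) vU (cosetv_addv xX yX).
by rewrite (mem_cosetv_sub sW2U xX) (rpredDr vb vU) (negbTE vbU) (cosetv_addv xX yX).
Qed.

Lemma LAdir_in U W1 W2 x : x \in U -> LAdir U W1 W2 x = W1.
Proof. by rewrite /LAdir => ->. Qed.

Lemma LAdir_cosetv U W1 W2 vb x :
  vb \notin U -> x \in cosetv U vb -> LAdir U W1 W2 x = W2.
Proof. by move=> vbU xX; rewrite /LAdir (mem_cosetv_sub (subvv U) xX) (negbTE vbU). Qed.

Lemma maps_onto_deriv g A B DA DB :
  maps_onto g A B -> shift_joined A DA -> block_diff_in B DB ->
  forall x u, u \in DA x -> Defs.deriv g u x \in DB (g x).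
Proof.
move=> gAB shiftA diffB x u /shiftA[X XA /andP[xX xuX]].
rewrite /Defs.deriv addrC; apply: (diffB (g @: X)); rewrite ?imset_f //.
by rewrite -gAB imset_f.
Qed.

Lemma deriv_img_sub g A B DA DB u (S : {set V n}) W :
  maps_onto g A B -> shift_joined A DA -> block_diff_in B DB ->
  {in S, forall x, u \in DA x /\ DB (g x) = W} -> {subset deriv_img g u S <= W}.
Proof.
move=> gAB shiftA diffB dirS _ /imsetP[x xS ->].
by have [uDx <-] := dirS x xS; apply: maps_onto_deriv gAB shiftA diffB x u uDx.
Qed.

End BlockDirections.

Theorem lemma3p7 (n : nat) (g : {perm V n}) (g0 : g 0 = 0) :
  (* (i) *)
  (forall W W' : {vspace V n},
     maps_onto g (Lpart W) (Lpart W') ->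
     forall u, u \in W -> {subset deriv_img g u setT <= W'}) /\
  (* (ii) *)
  (forall (W U W1 W2 : {vspace V n}) (vbar0 : V n),
     hyperplane U -> (W1 <= U)%VS -> (W2 <= U)%VS -> vbar0 \notin U ->
     maps_onto g (Lpart W) (LApart U W1 W2 vbar0) ->
     forall u, u \in W ->
       {subset deriv_img g u (preimg g (vset U)) <= W1} /\
       (forall vbar : V n, vbar \notin U ->
          {subset deriv_img g u (preimg g (cosetv U vbar)) <= W2})) /\
  (* (iii) *)
  (forall (U W1 W2 W : {vspace V n}) (vbar0 : V n),
     hyperplane U -> (W1 <= U)%VS -> (W2 <= U)%VS -> vbar0 \notin U ->
     maps_onto g (LApart U W1 W2 vbar0) (Lpart W) ->
     (forall u, u \in W1 -> {subset deriv_img g u (vset U) <= W}) /\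
     (forall u, u \in W2 -> forall vbar : V n, vbar \notin U ->
        {subset deriv_img g u (cosetv U vbar) <= W})) /\
  (* (iv) *)
  (forall (U W1 W2 U' W1' W2' : {vspace V n}) (vbar0 vbar0' : V n),
     hyperplane U -> (W1 <= U)%VS -> (W2 <= U)%VS -> vbar0 \notin U ->
     hyperplane U' -> (W1' <= U')%VS -> (W2' <= U')%VS -> vbar0' \notin U' ->
     maps_onto g (LApart U W1 W2 vbar0) (LApart U' W1' W2' vbar0') ->
     forall (vbar vbar' : V n), vbar \notin U -> vbar' \notin U' ->
     (forall u, u \in W1 ->
        {subset deriv_img g u (vset U :&: preimg g (vset U')) <= W1'}) /\
     (forall u, u \in W2 ->
        {subset deriv_img g u (cosetv U vbar :&: preimg g (vset U')) <= W1'}) /\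
     (forall u, u \in W1 ->
        {subset deriv_img g u (vset U :&: preimg g (cosetv U' vbar')) <= W2'}) /\
     (forall u, u \in W2 ->
        {subset deriv_img g u (cosetv U vbar :&: preimg g (cosetv U' vbar')) <= W2'})).
Proof.
split; [|split; [|split]].
- move=> W W' gLL u uW.
  by apply: (deriv_img_sub gLL (Lpart_shift (W := W)) (Lpart_diff (W := W'))).
- move=> W U W1 W2 vb0 _ sW1U sW2U vb0U gLLA u uW.
  have sub := deriv_img_sub gLLA (Lpart_shift (W := W)) (LApart_diff sW1U sW2U vb0U).
  split=> [|vb vbU]; apply: sub => x; rewrite !inE => gxS.
  + by rewrite LAdir_in.
  + by rewrite (LAdir_cosetv _ _ vbU gxS).
- move=> U W1 W2 W vb0 dimU _ _ vb0U gLAL.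
  have sub := deriv_img_sub gLAL (LApart_shift dimU vb0U) (Lpart_diff (W := W)).
  split=> [u uW1 | u uW2 vb vbU]; apply: sub => x; rewrite ?inE => xS.
  + by rewrite LAdir_in.
  + by rewrite (LAdir_cosetv _ _ vbU xS).
- move=> U W1 W2 U' W1' W2' vb0 vb0' dimU _ _ vb0U _ sW1U' sW2U' vb0U' gLALA
    vb vb' vbU vbU'.
  have sub := deriv_img_sub gLALA (LApart_shift dimU vb0U)
    (LApart_diff sW1U' sW2U' vb0U').
  split; [|split; [|split]] => u uW; apply: sub => x /setIP[]; rewrite ?inE => xS gxS'.
  + by rewrite !LAdir_in.
  + by rewrite (LAdir_cosetv _ _ vbU xS) LAdir_in.
  + by rewrite (LAdir_cosetv _ _ vbU' gxS') LAdir_in.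
  + by rewrite (LAdir_cosetv _ _ vbU xS) (LAdir_cosetv _ _ vbU' gxS').
Qed.
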